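(* Let $(S, \cdot)$ be a semigroup, let $r$ be an idempotent in $J(S)$, and let $R: \mathcal{P}_f({}^{\mathbb{N}}S) \to r$ be a function. Then there exist a function $\mu: \mathcal{P}_f({}^{\mathbb{N}}S) \to \mathbb{N}$, $\alpha \in \times_{F \in \mathcal{P}_f({}^{\mathbb{N}}S)} S^{\mu(F) + 1}$ and $\tau \in \times_{F \in \mathcal{P}_f({}^{\mathbb{N}}S)} \mathcal{J}_{\mu(F)}$ such that (1) if $F, G \in \mathcal{P}_f({}^{\mathbb{N}}S)$ and $F \subsetneq G$, then $\tau(F)(\mu(F)) < \tau(G)(1)$; and (2) if $m \in \mathbb{N}$, $G_1, \ldots, G_m \in \mathcal{P}_f({}^{\mathbb{N}}S)$ with $G_1 \subsetneq \cdots \subsetneq G_m$, and $f_i \in G_i$ for each $i \in \{1, \ldots, m\}$, then $\prod_{i=1}^{m} x(\mu(G_i), \alpha(G_i), \tau(G_i), f_i) \in R(G_1)$ (product taken in increasing order of $i$).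
   Context: ${}^{\mathbb{N}}S$ is the set of all sequences $f:\mathbb{N}\to S$; $\mathcal{P}_f(X)$ is the set of nonempty finite subsets of $X$. For $k\in\mathbb{N}$, $\mathcal{J}_k=\{t\in\mathbb{N}^k: t(1)<t(2)<\cdots<t(k)\}$. For $k\in\mathbb{N}$, $a\in S^{k+1}$, $t\in\mathcal{J}_k$ and $f\in{}^{\mathbb{N}}S$, $x(k,a,t,f)=\big(\prod_{j=1}^k a(j)f(t(j))\big)a(k+1) = a(1)f(t(1))a(2)f(t(2))\cdots a(k)f(t(k))a(k+1)$. A set $A\subseteq S$ is a J-set if for every $F\in\mathcal{P}_f({}^{\mathbb{N}}S)$ there exist $k\in\mathbb{N}$, $a\in S^{k+1}$ and $t\in\mathcal{J}_k$ such that $x(k,a,t,f)\in A$ for all $f\in F$. $\beta S$ is the set of ultrafilters on $S$ with $p\cdot q = \{A\subseteq S: \{x : x^{-1}A\in q\}\in p\}$, $x^{-1}A=\{y: xy\in A\}$; $J(S)=\{p\in\beta S: \text{every member of } p \text{ is a J-set}\}$, and $r$ is idempotent if $r\cdot r=r$. *)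

From Stdlib Require Import List Arith Lia.
Import ListNotations.

Section Defs.
Context {T : Type} (op : T -> T -> T).

(* Sequences f : N -> T, N = {1,2,...}; value at 0 is irrelevant. *)
Definition seqS := nat -> T.

(* F is in P_f(X): a nonempty finite set (finite = enumerated by a list). *)
Definition Pf {X : Type} (F : X -> Prop) : Prop :=
  (exists l : list X, forall x, F x <-> In x l) /\ (exists x, F x).

Definition proper_subset {X : Type} (F G : X -> Prop) : Prop :=
  (forall x, F x -> G x) /\ (exists x, G x /\ ~ F x).

(* t in J_k: t(1) < ... < t(k), all in N (>= 1); a k-tuple is coded as a
   function on nat with 1-based indices 1..k. *)
Definition Jk (k : nat) (t : nat -> nat) : Prop :=
  (forall i, 1 <= i <= k -> 1 <= t i) /\
  (forall i j, 1 <= i -> i < j -> j <= k -> t i < t j).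

Fixpoint xaux (a : nat -> T) (t : nat -> nat) (f : seqS) (n j : nat) : T :=
  match n with
  | 0 => a j
  | Datatypes.S n' => op (op (a j) (f (t j))) (xaux a t f n' (Datatypes.S j))
  end.

(* x(k,a,t,f) = a(1) f(t(1)) a(2) ... a(k) f(t(k)) a(k+1) *)
Definition xkatf (k : nat) (a : nat -> T) (t : nat -> nat) (f : seqS) : T :=
  xaux a t f k 1.

(* lprod g n = g(1) g(2) ... g(n+1) (left to right) *)
Fixpoint lprod (g : nat -> T) (n : nat) : T :=
  match n with
  | 0 => g 1
  | Datatypes.S n' => op (lprod g n') (g (Datatypes.S (Datatypes.S n')))
  end.

Definition JSet (A : T -> Prop) : Prop :=
  forall F : seqS -> Prop, Pf F ->
    exists k : nat, 1 <= k /\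
    exists (a : nat -> T) (t : nat -> nat),
      Jk k t /\ forall f, F f -> A (xkatf k a t f).

Definition ultrafilter (p : (T -> Prop) -> Prop) : Prop :=
  p (fun _ => True) /\
  ~ p (fun _ => False) /\
  (forall A B : T -> Prop, p A -> (forall x, A x -> B x) -> p B) /\
  (forall A B : T -> Prop, p A -> p B -> p (fun x => A x /\ B x)) /\
  (forall A : T -> Prop, p A \/ p (fun x => ~ A x)).

Definition uprod (p q : (T -> Prop) -> Prop) : (T -> Prop) -> Prop :=
  fun A => p (fun x => q (fun y => A (op x y))).

Definition in_JS (p : (T -> Prop) -> Prop) : Prop :=
  ultrafilter p /\ forall A, p A -> JSet A.

Definition idempotent (r : (T -> Prop) -> Prop) : Prop :=
  forall A, uprod r r A <-> r A.

End Defs.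

From Stdlib Require Import List Arith Lia.
From Stdlib Require Import Classical ClassicalEpsilon FunctionalExtensionality PropExtensionality.

(* For every finite family F we choose, by recursion on its size, a witness (mu F, alpha F,
   tau F) together with a set Q_F in r such that Q_F is contained in R(F), y^{-1}Q_F is in r
   for every y in Q_F, x(F,f) lies in Q_F for f in F, and x(G,g) Q_F is contained in Q_G for
   every proper subfamily G and g in G.  Take Q_F = A* where A is R(F) intersected with the
   finitely many sets x(G,g)^{-1}Q_G, all in r; A* = {x in A : x^{-1}A in r} is in r by
   idempotence, so it is a J-set, applied to F shifted past every index already used.  For a chain G_1, ..., G_m the product then lies in Q_(G_1), hence in
   R(G_1), by induction from the top of the chain. *)

Definition finite {X : Type} (P : X -> Prop) : Prop := exists l, forall x, P x -> In x l.

Lemma finite_sub {X : Type} (P Q : X -> Prop) :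
  finite P -> (forall x, Q x -> P x) -> finite Q.
Proof. intros [l Hl] HQP; exists l; auto. Qed.

Lemma Pf_finite {X : Type} (F : X -> Prop) : Pf F -> finite F.
Proof. intros [[l Hl] _]; exists l; intros x; apply Hl. Qed.

Lemma finite_bounded {X : Type} (P : X -> Prop) (h : X -> nat) :
  finite P -> exists N, forall x, P x -> h x <= N.
Proof.
  intros [l Hl]; exists (list_max (map h l)); intros x Px.
  assert (Hall : Forall (fun k => k <= list_max (map h l)) (map h l)).
  { apply list_max_le; reflexivity. }
  rewrite Forall_forall in Hall; apply Hall, in_map, Hl, Px.
Qed.

Lemma Pf_image {X Y : Type} (phi : X -> Y) (F : X -> Prop) :
  Pf F -> Pf (fun y => exists x, F x /\ y = phi x).
Proof.
  intros [[l Hl] [x Fx]]; split.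
  - exists (map phi l); intros y; rewrite in_map_iff; split.
    + intros [x' [Fx' ->]]; exists x'; split; [reflexivity | apply Hl, Fx'].
    + intros [x' [<- Hx']]; exists x'; split; [apply Hl, Hx' | reflexivity].
  - exists (phi x), x; auto.
Qed.

Section FiniteSubsets.
Context {X : Type}.

Fixpoint sublists (l : list X) : list (list X) :=
  match l with
  | nil => nil :: nil
  | a :: l => map (cons a) (sublists l) ++ sublists l
  end.

Lemma filter_in_sublists (b : X -> bool) (l : list X) : In (filter b l) (sublists l).
Proof.
  induction l as [|a l IH]; simpl; [auto|].
  apply in_or_app; destruct (b a); [left; apply in_map | right]; exact IH.
Qed.

Definition filter_prop (G : X -> Prop) (l : list X) : list X :=
  filter (fun x => if excluded_middle_informative (G x) then true else false) l.

Lemma in_filter_prop (G : X -> Prop) l x : In x (filter_prop G l) <-> In x l /\ G x.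
Proof.
  unfold filter_prop; rewrite filter_In.
  destruct (excluded_middle_informative (G x)); intuition discriminate.
Qed.

Lemma filter_prop_length_lt (G : X -> Prop) l :
  (exists x, In x l /\ ~ G x) -> length (filter_prop G l) < length l.
Proof.
  intros [x [Hx nGx]].
  destruct (Nat.lt_ge_cases (length (filter_prop G l)) (length l)) as [lt|ge]; [exact lt|].
  exfalso; apply nGx.
  pose proof (filter_length_forallb _ l (Nat.le_antisymm _ _ (filter_length_le _ l) ge)) as Hall.
  rewrite forallb_forall in Hall; specialize (Hall x Hx).
  destruct (excluded_middle_informative (G x)); [assumption | discriminate].
Qed.

Lemma enumerates_filter_prop (G : X -> Prop) l :
  (forall x, G x -> In x l) -> forall x, G x <-> In x (filter_prop G l).
Proof. intros HG x; rewrite in_filter_prop; intuition. Qed.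

Lemma finite_subsets (F : X -> Prop) l :
  (forall x, F x <-> In x l) -> finite (fun G : X -> Prop => forall x, G x -> F x).
Proof.
  intros Hl; exists (map (fun l' x => In x l') (sublists l)); intros G HG.
  apply in_map_iff; exists (filter_prop G l); split; [|apply filter_in_sublists].
  apply functional_extensionality; intros x; apply propositional_extensionality.
  symmetry; apply enumerates_filter_prop; intros y Gy; apply Hl, HG, Gy.
Qed.

Definition card_le (F : X -> Prop) (n : nat) : Prop :=
  exists l, (forall x, F x <-> In x l) /\ length l <= n.

Lemma card_le_subset (F G : X -> Prop) n :
  card_le F n -> (forall x, G x -> F x) -> card_le G n.
Proof.
  intros [l [Hl Hn]] HGF; exists (filter_prop G l); split.
  - apply enumerates_filter_prop; intros x Gx; apply Hl, HGF, Gx.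
  - pose proof (filter_length_le
      (fun x => if excluded_middle_informative (G x) then true else false) l); unfold filter_prop; lia.
Qed.

Lemma card_le_proper (F G : X -> Prop) n :
  card_le F (S n) -> proper_subset G F -> card_le G n.
Proof.
  intros [l [Hl Hn]] [HGF [x [Fx nGx]]]; exists (filter_prop G l); split.
  - apply enumerates_filter_prop; intros y Gy; apply Hl, HGF, Gy.
  - enough (length (filter_prop G l) < length l) by lia.
    apply filter_prop_length_lt; exists x; split; [apply Hl, Fx | exact nGx].
Qed.

Lemma Pf_card_le (F : X -> Prop) : Pf F -> exists n, card_le F n.
Proof. intros [[l Hl] _]; exists (length l), l; auto. Qed.

Lemma Pf_not_card_le0 (F : X -> Prop) : Pf F -> ~ card_le F 0.
Proof.
  intros [_ [x Fx]] [[|y l] [Hl Hn]]; [exact (proj1 (Hl x) Fx) | simpl in Hn; lia].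
Qed.

End FiniteSubsets.

Section Ultrafilter.
Context {T : Type} (p : (T -> Prop) -> Prop) (p_ultra : ultrafilter p).

Lemma ultrafilter_mono (A B : T -> Prop) : p A -> (forall x, A x -> B x) -> p B.
Proof. destruct p_ultra as (_ & _ & Hmono & _); eauto. Qed.

Lemma ultrafilter_and (A B : T -> Prop) : p A -> p B -> p (fun x => A x /\ B x).
Proof. destruct p_ultra as (_ & _ & _ & Hand & _); auto. Qed.

Lemma ultrafilter_full (B : T -> Prop) : (forall x, B x) -> p B.
Proof. intros HB; apply ultrafilter_mono with (fun _ => True); [apply p_ultra | auto]. Qed.

Lemma ultrafilter_inhabited : inhabited T.
Proof.
  destruct (classic (inhabited T)) as [inh | ninh]; [exact inh|].
  exfalso; apply (proj1 (proj2 p_ultra)).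
  apply ultrafilter_full; intros x; apply ninh; constructor; exact x.
Qed.

Lemma ultrafilter_forall_list {I : Type} (L : list I) (B : I -> T -> Prop) :
  (forall i, In i L -> p (B i)) -> p (fun y => forall i, In i L -> B i y).
Proof.
  induction L as [|a L IH]; intros HB.
  - apply ultrafilter_full; intros y i [].
  - apply ultrafilter_mono with (fun y => B a y /\ forall i, In i L -> B i y).
    + apply ultrafilter_and; [apply HB; left; reflexivity | apply IH; intros i Hi; apply HB; right; exact Hi].
    + intros y [Ha HL] i [<- | Hi]; auto.
Qed.

Lemma ultrafilter_forall_finite {I : Type} (P : I -> Prop) (B : I -> T -> Prop) :
  finite P -> (forall i, P i -> p (B i)) -> p (fun y => forall i, P i -> B i y).
Proof.
  intros [L HL] HB.
  apply ultrafilter_mono with (fun y => forall i, In i L -> P i -> B i y).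
  - apply ultrafilter_forall_list; intros i _.
    destruct (classic (P i)) as [Pi | nPi].
    + apply ultrafilter_mono with (B i); auto.
    + apply ultrafilter_full; intros y Pi; contradiction.
  - intros y H i Pi; apply H; auto.
Qed.

End Ultrafilter.

Lemma xkatf_shift {T : Type} (op : T -> T -> T) k a t (f : nat -> T) N :
  xkatf op k a t (fun m => f (m + N)) = xkatf op k a (fun i => t i + N) f.
Proof.
  unfold xkatf; generalize 1; induction k as [|k IH]; intros j; simpl; [reflexivity|].
  rewrite IH; reflexivity.
Qed.

Lemma Jk_shift k t N : Jk k t -> Jk k (fun i => t i + N).
Proof.
  intros [Hpos Hlt]; split.
  - intros i Hi; specialize (Hpos i Hi); lia.
  - intros i j Hi Hij Hj; specialize (Hlt i j Hi Hij Hj); lia.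
Qed.

Lemma lprod_succ {T : Type} (op : T -> T -> T)
  (op_assoc : forall x y z, op x (op y z) = op (op x y) z) g m :
  lprod op g (S m) = op (g 1) (lprod op (fun i => g (S i)) m).
Proof.
  induction m as [|m IH]; [reflexivity|].
  change (op (lprod op g (S m)) (g (S (S (S m)))) =
          op (g 1) (op (lprod op (fun i => g (S i)) m) (g (S (S (S m)))))).
  rewrite IH, op_assoc; reflexivity.
Qed.

Section Construction.
Context {S : Type} (op : S -> S -> S).
Hypothesis op_assoc : forall x y z, op x (op y z) = op (op x y) z.
Variable r : (S -> Prop) -> Prop.
Hypothesis r_ultra : ultrafilter r.
Hypothesis r_Jsets : forall A, r A -> JSet op A.
Hypothesis r_idem : idempotent op r.
Variable R : ((nat -> S) -> Prop) -> S -> Prop.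
Hypothesis R_in_r : forall F, Pf F -> r (R F).

Local Notation family := ((nat -> S) -> Prop).

Definition star (A : S -> Prop) : S -> Prop := fun x => A x /\ r (fun y => A (op x y)).

Definition translation_closed (Q : S -> Prop) : Prop :=
  forall y, Q y -> r (fun z => Q (op y z)).

Lemma star_in_r A : r A -> r (star A).
Proof. intros HA; apply (ultrafilter_and r r_ultra); [exact HA | apply r_idem, HA]. Qed.

Lemma star_translation_closed A : translation_closed (star A).
Proof.
  intros x [_ Hx]; apply (ultrafilter_mono r r_ultra) with (star (fun y => A (op x y))).
  - apply star_in_r, Hx.
  - intros y [Hy Hxy]; split; [exact Hy|].
    apply (ultrafilter_mono r r_ultra) with (1 := Hxy); intros z; rewrite op_assoc; auto.
Qed.

Record witness := { w_mu : nat; w_alpha : nat -> S; w_tau : nat -> nat; w_set : S -> Prop }.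

Definition w_x (v : witness) (f : nat -> S) : S := xkatf op (w_mu v) (w_alpha v) (w_tau v) f.

Record admissible (s : family -> witness) (F : family) (v : witness) : Prop := {
  adm_mu_pos : 1 <= w_mu v;
  adm_Jk : Jk (w_mu v) (w_tau v);
  adm_set_in_r : r (w_set v);
  adm_set_sub_R : forall y, w_set v y -> R F y;
  adm_set_closed : translation_closed (w_set v);
  adm_x_in_set : forall f, F f -> w_set v (w_x v f);
  adm_tau_lt : forall G, Pf G -> proper_subset G F -> w_tau (s G) (w_mu (s G)) < w_tau v 1;
  adm_x_mul : forall G, Pf G -> proper_subset G F -> forall g, G g ->
    forall z, w_set v z -> w_set (s G) (op (w_x (s G) g) z) }.

Lemma admissible_ext s s' F v :
  admissible s F v -> (forall G, Pf G -> proper_subset G F -> s' G = s G) -> admissible s' F v.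
Proof.
  intros [? ? ? ? ? ? Htau Hmul] Hss'; constructor; auto;
    intros G PG PGF; rewrite (Hss' G PG PGF); auto.
Qed.

Lemma admissible_exists s F :
  Pf F -> (forall G, Pf G -> proper_subset G F -> admissible s G (s G)) ->
  exists v, admissible s F v.
Proof.
  intros PF IH.
  set (sub := fun G : family => Pf G /\ proper_subset G F).
  assert (sub_finite : finite sub).
  { destruct (proj1 PF) as [l Hl]; apply finite_sub with (1 := finite_subsets F l Hl).
    intros G [_ [HGF _]]; exact HGF. }
  set (A := fun y => R F y /\
    forall G, sub G -> forall g, G g -> w_set (s G) (op (w_x (s G) g) y)).
  assert (rA : r A).
  { apply (ultrafilter_and r r_ultra); [apply R_in_r, PF|].
    apply (ultrafilter_forall_finite r r_ultra); [exact sub_finite|]; intros G [PG PGF].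
    apply (ultrafilter_forall_finite r r_ultra); [apply Pf_finite, PG|]; intros g Gg.
    destruct (IH G PG PGF) as [_ _ _ _ Hclosed Hx _ _]; apply Hclosed, Hx, Gg. }
  destruct (finite_bounded sub (fun G => w_tau (s G) (w_mu (s G))) sub_finite) as [N HN].
  (* Shifting the family by N places every index of the new witness after those of the
     witnesses already chosen for proper subfamilies. *)
  destruct (r_Jsets (star A) (star_in_r A rA) _ (Pf_image (fun f m => f (m + N)) F PF))
    as (k & Hk & a & t & Jt & Ht).
  assert (t1 : 1 <= t 1) by (apply (proj1 Jt); lia).
  exists {| w_mu := k; w_alpha := a; w_tau := fun i => t i + N; w_set := star A |};
    constructor; simpl.
  - exact Hk.
  - apply Jk_shift, Jt.
  - apply star_in_r, rA.
  - intros y [[Hy _] _]; exact Hy.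
  - apply star_translation_closed.
  - intros f Ff; unfold w_x; simpl; rewrite <- xkatf_shift; apply Ht; exists f; auto.
  - intros G PG PGF; specialize (HN G (conj PG PGF)); simpl in HN; lia.
  - intros G PG PGF g Gg z [[_ Hz] _]; exact (Hz G (conj PG PGF) g Gg).
Qed.

Definition coherent (s : family -> witness) : Prop := forall F, Pf F -> admissible s F (s F).

Section Recursion.
Variable s0 : S.

Definition default_witness : witness :=
  {| w_mu := 0; w_alpha := fun _ => s0; w_tau := fun _ => 0; w_set := fun _ => True |}.

Definition next_witness (s : family -> witness) (F : family) : witness :=
  epsilon (inhabits default_witness) (admissible s F).

Fixpoint approx (n : nat) : family -> witness :=
  match n with
  | 0 => fun _ => default_witness
  | Datatypes.S n => fun F =>
      if excluded_middle_informative (card_le F n) then approx n F else next_witness (approx n) F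
  end.

Lemma approx_stable n m F : card_le F n -> n <= m -> approx m F = approx n F.
Proof.
  intros Hn Hnm; induction Hnm as [|m Hnm IH]; [reflexivity|]; simpl.
  destruct (excluded_middle_informative (card_le F m)) as [_ | Hm]; [exact IH|].
  exfalso; apply Hm; destruct Hn as [l [Hl Hlen]]; exists l; split; [exact Hl | lia].
Qed.

Lemma approx_admissible n F : Pf F -> card_le F n -> admissible (approx n) F (approx n F).
Proof.
  revert F; induction n as [|n IH]; intros F PF Hn.
  - exfalso; exact (Pf_not_card_le0 F PF Hn).
  - assert (agree : forall G, Pf G -> proper_subset G F -> approx (Datatypes.S n) G = approx n G).
    { intros G _ PGF; apply approx_stable; [exact (card_le_proper F G n Hn PGF) | lia]. }
    apply admissible_ext with (approx n); [|exact agree]; simpl.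
    destruct (excluded_middle_informative (card_le F n)) as [Fn | _]; [exact (IH F PF Fn)|].
    unfold next_witness; apply epsilon_spec, admissible_exists; [exact PF|].
    intros G PG PGF; apply IH; [exact PG | exact (card_le_proper F G n Hn PGF)].
Qed.

Definition system (F : family) : witness := approx (epsilon (inhabits 0) (card_le F)) F.

Lemma system_approx F n : card_le F n -> system F = approx n F.
Proof.
  intros Hn; unfold system; set (m := epsilon _ _).
  assert (Hm : card_le F m) by (apply epsilon_spec; exists n; exact Hn).
  transitivity (approx (max n m) F); [symmetry|]; apply approx_stable; (assumption || lia).
Qed.

Lemma system_coherent : coherent system.
Proof.
  intros F PF; destruct (Pf_card_le F PF) as [n Hn]; rewrite (system_approx F n Hn).
  apply admissible_ext with (approx n); [exact (approx_admissible n F PF Hn)|].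
  intros G _ PGF; apply system_approx, card_le_subset with F; [exact Hn | apply PGF].
Qed.

End Recursion.

Lemma coherent_exists : exists s, coherent s.
Proof.
  destruct (ultrafilter_inhabited r r_ultra) as [s0]; exists (system s0); apply system_coherent.
Qed.

Lemma coherent_chain s (Hs : coherent s) m (Gs : nat -> family) (fs : nat -> nat -> S) :
  (forall i, 1 <= i <= Datatypes.S m -> Pf (Gs i)) ->
  (forall i, 1 <= i <= m -> proper_subset (Gs i) (Gs (i + 1))) ->
  (forall i, 1 <= i <= Datatypes.S m -> Gs i (fs i)) ->
  w_set (s (Gs 1)) (lprod op (fun i => w_x (s (Gs i)) (fs i)) m).
Proof.
  revert Gs fs; induction m as [|m IH]; intros Gs fs HP HS HF.
  - apply (adm_x_in_set _ _ _ (Hs _ (HP 1 ltac:(lia)))), HF; lia.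
  - rewrite lprod_succ by exact op_assoc.
    apply (adm_x_mul _ _ _ (Hs (Gs 2) (HP 2 ltac:(lia))));
      [apply HP; lia | apply HS; lia | apply HF; lia |].
    apply (IH (fun i => Gs (Datatypes.S i)) (fun i => fs (Datatypes.S i)));
      intros i Hi; [apply HP | cbv beta; rewrite <- Nat.add_succ_l; apply HS | apply HF]; lia.
Qed.

End Construction.

Theorem theorem3p2 (S : Type) (op : S -> S -> S)
  (op_assoc : forall x y z, op x (op y z) = op (op x y) z)
  (r : (S -> Prop) -> Prop)
  (hrJ : in_JS op r) (hr : idempotent op r)
  (R : ((nat -> S) -> Prop) -> (S -> Prop))
  (hR : forall F, Pf F -> r (R F)) :
  exists (mu : ((nat -> S) -> Prop) -> nat)
         (alpha : ((nat -> S) -> Prop) -> nat -> S)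
         (tau : ((nat -> S) -> Prop) -> nat -> nat),
    (forall F, Pf F -> 1 <= mu F /\ Jk (mu F) (tau F)) /\
    (forall F G, Pf F -> Pf G -> proper_subset F G ->
       tau F (mu F) < tau G 1) /\
    (forall (m : nat) (Gs : nat -> ((nat -> S) -> Prop)) (fs : nat -> nat -> S),
       1 <= m ->
       (forall i, 1 <= i <= m -> Pf (Gs i)) ->
       (forall i, 1 <= i < m -> proper_subset (Gs i) (Gs (i + 1))) ->
       (forall i, 1 <= i <= m -> Gs i (fs i)) ->
       R (Gs 1)
         (lprod op (fun i => xkatf op (mu (Gs i)) (alpha (Gs i)) (tau (Gs i)) (fs i))
                (m - 1))).
Proof.
  destruct hrJ as [r_ultra r_Jsets].
  destruct (coherent_exists op op_assoc r r_ultra r_Jsets hr R hR) as [s Hs].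
  exists (fun F => w_mu (s F)), (fun F => w_alpha (s F)), (fun F => w_tau (s F)).
  split; [|split].
  - intros F PF; destruct (Hs F PF) as [Hmu HJ _ _ _ _ _ _]; auto.
  - intros F G PF PG PFG; destruct (Hs G PG) as [_ _ _ _ _ _ Htau _]; auto.
  - intros m Gs fs Hm HP HS HF; destruct m as [|m]; [lia|].
    destruct (Hs (Gs 1) (HP 1 ltac:(lia))) as [_ _ _ HsubR _ _ _ _]; apply HsubR.
    replace (Datatypes.S m - 1) with m by lia.
    apply (coherent_chain op op_assoc r R s Hs); intros i Hi; [apply HP | apply HS | apply HF]; lia.
Qed.
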